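(* For every integer $n>16$, the generalized Petersen graph $GP(n,3)$ is not $\ell$-distance-balanced for any integer $\ell$ with $1\le \ell<{\rm diam}(GP(n,3))$. Moreover, $16$ is the smallest integer with this property, i.e., $16$ is the smallest integer $N$ such that for every $n>N$ the graph $GP(n,3)$ is not $\ell$-distance-balanced for any $1\le \ell<{\rm diam}(GP(n,3))$.
   Context: For a connected graph $G$ and $x,y\in V(G)$, $d_G(x,y)$ denotes the distance and ${\rm diam}(G)$ the diameter. Let $W_{xy}=\{w\in V(G): d_G(w,x)<d_G(w,y)\}$. For an integer $\ell$ with $1\le \ell\le {\rm diam}(G)$, $G$ is called $\ell$-distance-balanced if $|W_{xy}|=|W_{yx}|$ for every pair $x,y\in V(G)$ with $d_G(x,y)=\ell$. For integers $n\ge 3$ and $1\le k<n/2$, the generalized Petersen graph $GP(n,k)$ has vertex set $\{u_i: i\in\mathbb{Z}_n\}\cup\{v_i: i\in\mathbb{Z}_n\}$ and edge set $\{u_iu_{i+1}: i\in\mathbb{Z}_n\}\cup\{v_iv_{i+k}: i\in\mathbb{Z}_n\}\cup\{u_iv_i: i\in\mathbb{Z}_n\}$. *)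

From mathcomp Require Import all_boot.
Set Implicit Arguments. Unset Strict Implicit. Unset Printing Implicit Defensive.

Section Graphs.
Variables (T : finType) (e : rel T).

Definition walk_of_len (x y : T) (d : nat) : bool :=
  [exists p : d.-tuple T, path e x p && (last x p == y)].

(* graph distance: the least d with a walk of length d from x to y
   (shortest walks are paths, of length < #|T|); equals #|T| if y is
   unreachable from x, which never happens in a connected graph *)
Definition gdist (x y : T) : nat :=
  find (walk_of_len x y) (iota 0 #|T|).

Definition diam : nat := \max_(x : T) \max_(y : T) gdist x y.

Definition Wset (x y : T) : {set T} := [set w | gdist w x < gdist w y].

Definition l_distance_balanced (l : nat) : Prop :=
  forall x y : T, gdist x y = l -> #|Wset x y| = #|Wset y x|.

End Graphs.

(* vertices of GP(n,k): (false, i) = u_i, (true, i) = v_i *)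
Definition GPvert (n : nat) : finType := (bool * 'I_n)%type.

Definition GP (n k : nat) : rel (GPvert n) :=
  fun a b =>
    match a, b with
    | (false, i), (false, j) => (j == (i + 1) %% n :> nat) || (i == (j + 1) %% n :> nat)
    | (true, i), (true, j) => (j == (i + k) %% n :> nat) || (i == (j + k) %% n :> nat)
    | (false, i), (true, j) => i == j
    | (true, i), (false, j) => i == j
    end.
Arguments GP : clear implicits.

(* For n >= 16 the distances of GP(n,3) have a closed form, which is
   certified by checking that it vanishes at the source, grows by at most one
   along every edge and drops by exactly one along some edge at every other
   vertex.  A distance l is realised by u_0 and a suitable v_m, and the sets
   W_{u_0 v_m}, W_{v_m u_0} are compared through the pairs u_i, v_(m-i): with
   m = 3l-7 for l >= 7, m = 3l-5 for l = 5, 6 and m = 0, 1, 4, 9 for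
   l = 1, ..., 4, every pair away from a few indices near 0 leans towards v_m,
   and near 0 the balance is computed explicitly.  The orders 17 <= n <= 25
   and the 5-distance-balanced graph GP(16,3), of diameter 6, are settled by
   computation. *)

From mathcomp Require Import all_boot zify.
Set Implicit Arguments. Unset Strict Implicit. Unset Printing Implicit Defensive.

Section DistancePotential.
Variables (T : finType) (e : rel T) (x : T) (g : T -> nat).
Hypothesis g_root : g x = 0.
Hypothesis g_edge : forall y z, e y z -> g z <= (g y).+1.
Hypothesis g_pred : forall y, y != x -> exists2 z, e z y & (g z).+1 = g y.
Hypothesis g_small : forall y, g y < #|T|.

Lemma potential_path p z : path e z p -> g (last z p) <= g z + size p.
Proof.
elim: p z => [|a p IH] z /=; first by rewrite addn0.
by case/andP=> /g_edge ez /IH; rewrite addnS; lia.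
Qed.

Lemma walk_of_len_potential_le y d : walk_of_len e x y d -> g y <= d.
Proof.
case/existsP=> p /andP[/potential_path + /eqP <-].
by rewrite g_root size_tuple.
Qed.

Lemma walk_of_len_potential k y : g y = k -> walk_of_len e x y k.
Proof.
elim: k y => [|k IH] y gy.
  have -> : y = x by apply/eqP/negPn/negP => /g_pred[z _]; rewrite gy.
  by apply/existsP; exists [tuple]; rewrite /= eqxx.
have /g_pred[z ezy gz] : y != x by apply/eqP=> yx; rewrite yx g_root in gy.
have /existsP[p /andP[pp /eqP pz]] := IH z (congr1 predn (etrans gz gy)).
have sz : size (rcons p y) == k.+1 by rewrite size_rcons size_tuple.
by apply/existsP; exists (Tuple sz); rewrite /= rcons_path pp pz ezy last_rcons eqxx.
Qed.

Lemma gdist_potential y : gdist e x y = g y.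
Proof.
rewrite /gdist -(subnKC (ltnW (g_small y))) iotaD find_cat size_iota add0n.
have -> : has (walk_of_len e x y) (iota 0 (g y)) = false.
  apply/hasP=> -[d]; rewrite mem_iota add0n => /andP[_ ltd] /walk_of_len_potential_le.
  by rewrite leqNgt ltd.
have /prednK <- : 0 < #|T| - g y by rewrite subn_gt0.
by rewrite /= walk_of_len_potential ?addn0.
Qed.

End DistancePotential.

(* [lia] is much faster once every non-truncating subtraction is named. *)
Ltac abstract_subn := repeat match goal with
  | |- context [?a - ?b] =>
      lazymatch a with context [_ - _] => fail | _ => idtac end;
      lazymatch b with context [_ - _] => fail | _ => idtac end;
      let k := fresh "k" in let hk := fresh "hk" in
      have [k [-> hk]] : exists k, a - b = k /\ k + b = a by exists (a - b); split => //; lia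
  end.

Ltac split_minn := repeat match goal with
  | |- context [minn ?a ?b] =>
      let h := fresh "hm" in
      case: (leqP a b) => h; [rewrite (minn_idPl h) | rewrite (minn_idPr (ltnW h))]
  end.

Ltac split_if := repeat match goal with |- context [if _ then _ else _] => case: ifP => ? end.

Lemma modn_lt2 a n : a < n.*2 -> a %% n = if a < n then a else a - n.
Proof.
move=> h; case: ifP => h2; first by rewrite modn_small.
have na : n <= a by rewrite leqNgt h2.
by rewrite -[in LHS](subnK na) modnDr modn_small //; lia.
Qed.

(* Length of a shortest walk that never moves backwards, from a vertex of kind
   [a] (false: outer u, true: inner v) to the vertex of kind [b] lying [r]
   positions further on: [r %/ 3] inner edges, [r %% 3] rim edges and the
   spokes needed to switch cycles (or, between outer vertices, the rim alone). *)
Definition gp3_arc (a b : bool) (r : nat) : nat :=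
  match a, b with
  | false, false => minn r (r %/ 3 + r %% 3 + 2)
  | true, true => r %/ 3 + r %% 3 + 2 * minn (r %% 3) 1
  | _, _ => r %/ 3 + r %% 3 + 1
  end.

Definition gp3_dist (a b : bool) (n r : nat) : nat :=
  minn (gp3_arc a b r) (gp3_arc a b (n - r)).

Ltac gp3_lia := rewrite /gp3_dist /gp3_arc; split_if; abstract_subn; split_minn; lia.

Definition gp3_jump (b : bool) : nat := if b then 3 else 1.

Lemma gp3_dist_jump a b n r : 16 <= n -> r < n ->
  gp3_dist a b n ((r + gp3_jump b) %% n) <= (gp3_dist a b n r).+1 /\
  gp3_dist a b n r <= (gp3_dist a b n ((r + gp3_jump b) %% n)).+1.
Proof.
move=> ? ?; rewrite /gp3_jump modn_lt2; last by case: b; lia.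
by case: a; case: b; split; gp3_lia.
Qed.

Lemma gp3_dist_spoke a n r : 16 <= n -> r < n ->
  gp3_dist a true n r <= (gp3_dist a false n r).+1 /\
  gp3_dist a false n r <= (gp3_dist a true n r).+1.
Proof. by move=> ? ?; case: a; split; gp3_lia. Qed.

(* Which neighbour precedes the endpoint on a shortest walk depends on the
   direction of the walk and on whether it ends with a spoke. *)
Lemma gp3_dist_pred a b n r : 16 <= n -> r < n -> (a = b -> 0 < r) ->
  (gp3_dist a b n ((r + gp3_jump b) %% n)).+1 = gp3_dist a b n r \/
  (gp3_dist a b n ((r + (n - gp3_jump b)) %% n)).+1 = gp3_dist a b n r \/
  (gp3_dist a (~~ b) n r).+1 = gp3_dist a b n r.
Proof.
move=> ? ? r_gt0.
case: (leqP (gp3_arc a b r) (gp3_arc a b (n - r))) => forward;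
  case: a b r_gt0 forward => -[] r_gt0 forward;
  rewrite /= !modn_lt2; try lia.
- have {}r_gt0 := r_gt0 erefl.
  case: (boolP (r %% 3 == 0)) => r3; [right; left | right; right];
    move: r3 forward; gp3_lia.
- case: (boolP (r %% 3 == 0)) => r3; [right; right | right; left];
    move: r3 forward; gp3_lia.
- case: (boolP (r < 3)) => r3; [right; right | right; left];
    move: r3 forward; gp3_lia.
- have {}r_gt0 := r_gt0 erefl.
  case: (boolP ((2 < r) && (r %% 3 == 0))) => r3; [right; right | right; left];
    move: r3 forward; gp3_lia.
- case: (boolP ((n - r) %% 3 == 0)) => r3; [left | right; right];
    move: r3 forward; gp3_lia.
- case: (boolP ((n - r) %% 3 == 0)) => r3; [right; right | left];
    move: r3 forward; gp3_lia.
- case: (boolP (n - r < 3)) => r3; [right; right | left];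
    move: r3 forward; gp3_lia.
- case: (boolP ((2 < n - r) && ((n - r) %% 3 == 0))) => r3; [right; right | left];
    move: r3 forward; gp3_lia.
Qed.

Definition offset n (i j : nat) : nat := (j + n - i) %% n.

Lemma offset_lt n i j : 0 < n -> offset n i j < n.
Proof. exact: ltn_pmod. Qed.

Lemma offset_addr n i j d : i < n -> offset n i ((j + d) %% n) = (offset n i j + d) %% n.
Proof. by move=> /ltnW i_le; rewrite /offset -!addnBA // modnDml modnDml addnAC. Qed.

Lemma offset_eq0 n i j : i < n -> j < n -> (offset n i j == 0) = (j == i).
Proof. by move=> ? ?; rewrite /offset modn_lt2; [case: ifP => ?; apply/eqP/eqP; lia | lia]. Qed.

Lemma modn_addn_subnK n j d : 0 < d <= n -> j < n -> ((j + (n - d)) %% n + d) %% n = j.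
Proof. by move=> ? ?; rewrite modnDml -addnA subnK ?modnDr ?modn_small //; lia. Qed.

Lemma GP3_jump n b (j k : 'I_n) :
  GP n 3 (b, j) (b, k) = (k == (j + gp3_jump b) %% n :> nat) || (j == (k + gp3_jump b) %% n :> nat).
Proof. by case: b. Qed.

Lemma GP3_spoke n b (j : 'I_n) : GP n 3 (~~ b, j) (b, j).
Proof. by case: b => /=. Qed.

Definition gp3_distance n (x y : GPvert n) : nat := gp3_dist x.1 y.1 n (offset n x.2 y.2).

Lemma gp3_distance_edge n (x y z : GPvert n) : 16 <= n -> GP n 3 y z ->
  gp3_distance x z <= (gp3_distance x y).+1.
Proof.
move=> n16; have n_gt0 : 0 < n by lia.
case: x y z => a i [b j] [c k] yz; rewrite /gp3_distance /=.
have rj := offset_lt i j n_gt0; have rk := offset_lt i k n_gt0.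
case: (eqVneq c b) yz => [-> | /negPf cb].
  rewrite GP3_jump => /orP[] /eqP ->; rewrite offset_addr //.
    exact: (gp3_dist_jump a b n16 rj).1.
  exact: (gp3_dist_jump a b n16 rk).2.
by case: b c cb => -[] //= _ /eqP <-;
  [exact: (gp3_dist_spoke a n16 rj).2 | exact: (gp3_dist_spoke a n16 rj).1].
Qed.

Lemma gp3_distance_pred n (x y : GPvert n) : 16 <= n -> y != x ->
  exists2 z, GP n 3 z y & (gp3_distance x z).+1 = gp3_distance x y.
Proof.
move=> n16 yx; have n_gt0 : 0 < n by lia.
case: x y yx => a i [b j] yx; rewrite /gp3_distance /=.
have r_gt0 : a = b -> 0 < offset n i j.
  move=> ab; rewrite lt0n offset_eq0 //; apply: contra yx => /eqP ji.
  by rewrite ab; apply/eqP; congr pair; apply: val_inj.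
have jump_le : 0 < gp3_jump b <= n by rewrite /gp3_jump; case: ifP; lia.
case: (gp3_dist_pred n16 (offset_lt i j n_gt0) r_gt0) => [E | [E | E]].
- exists (b, Ordinal (ltn_pmod (j + gp3_jump b) n_gt0)); last by rewrite /= offset_addr.
  by rewrite GP3_jump eqxx orbT.
- exists (b, Ordinal (ltn_pmod (j + (n - gp3_jump b)) n_gt0)); last by rewrite /= offset_addr.
  by rewrite GP3_jump /= modn_addn_subnK ?eqxx.
- by exists (~~ b, j); first exact: GP3_spoke.
Qed.

Theorem gdist_GP3 n (x y : GPvert n) : 16 <= n -> gdist (GP n 3) x y = gp3_distance x y.
Proof.
move=> n16; apply: gdist_potential => [| {}y z | {}y | {}y].
- by rewrite /gp3_distance /offset addKn modnn; case: x.1; gp3_lia.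
- exact: gp3_distance_edge.
- exact: gp3_distance_pred.
- rewrite card_prod card_bool card_ord /gp3_distance.
  have := @offset_lt n x.2 y.2 (ltn_trans (isT : 0 < 15) n16).
  by case: x.1; case: y.1; gp3_lia.
Qed.

Definition gp3_diam_bound n : nat :=
  if n %% 6 == 5 then (n - 5) %/ 6 + 3 else (n - 4) %/ 6 + 4.

Lemma gp3_dist_le_diam_bound a b n r : 16 <= n -> r < n -> gp3_dist a b n r <= gp3_diam_bound n.
Proof. by move=> ? ?; rewrite /gp3_diam_bound; case: a; case: b; gp3_lia. Qed.

Lemma diam_GP3_le n : 16 <= n -> diam (GP n 3) <= gp3_diam_bound n.
Proof.
move=> n16; apply/bigmax_leqP => x _; apply/bigmax_leqP => y _.
by rewrite gdist_GP3 // gp3_dist_le_diam_bound // offset_lt //; lia.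
Qed.

Lemma gp3_dist_subn a b n r : r < n -> gp3_dist a b n ((n - r) %% n) = gp3_dist a b n r.
Proof.
rewrite /gp3_dist; case: r => [|r] r_lt; first by rewrite subn0 modnn subn0 minnC.
by rewrite modn_small ?subKn 1?minnC //; lia.
Qed.

Lemma offsetK n i m : i < n -> m < n -> offset n (offset n i m) m = i.
Proof.
move=> ? ?; rewrite /offset (modn_lt2 (a := m + n - i)); last lia.
by case: ifP => ?; rewrite modn_lt2; try lia; case: ifP; lia.
Qed.

Lemma card_set_bool_prod (I : finType) (P : pred (bool * I)) :
  #|[set w | P w]| = \sum_(i : I) (P (false, i) + P (true, i)).
Proof.
rewrite -sum1dep_card big_mkcond /=.
transitivity (\sum_(b : bool) \sum_(i : I) (if P (b, i) then 1 else 0)).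
  by rewrite pair_bigA; apply: eq_bigr => -[].
rewrite big_bool /= addnC -big_split /=.
by apply: eq_bigr => i _; case: (P (false, i)); case: (P (true, i)).
Qed.

(* For the pair u_0, v_m and an index i, the triple of distances
   (d(u_i, u_0), d(u_i, v_m), d(v_(m-i), v_m)); by symmetry the middle entry
   is also d(v_(m-i), u_0), so the triple decides on which side of the pair
   u_0, v_m the two vertices u_i and v_(m-i) lie. *)
Definition profile n m i : nat * nat * nat :=
  (gp3_dist false false n i, gp3_dist false true n (offset n i m), gp3_dist true true n i).

Lemma card_profile n (i0 j : 'I_n) (cmp : rel nat) : 16 <= n -> i0 = 0 :> nat ->
  #|[set w | cmp (gdist (GP n 3) w (false, i0)) (gdist (GP n 3) w (true, j))]| =
  \sum_(0 <= i < n) let: (b, a, c) := profile n j i in cmp b a + cmp a c.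
Proof.
move=> n16 i00; have n_gt0 : 0 < n by lia.
rewrite card_set_bool_prod big_mkord /= !big_split /=.
congr (_ + _).
  by apply: eq_bigr => i _; rewrite !gdist_GP3 // /gp3_distance /= /offset i00 add0n gp3_dist_subn.
pose sigma (i : 'I_n) : 'I_n := Ordinal (offset_lt i j n_gt0).
have sigmaK : involutive sigma by move=> k; apply: val_inj; rewrite /= offsetK.
rewrite (reindex_inj (inv_inj sigmaK)); apply: eq_bigr => i _.
rewrite !gdist_GP3 // /gp3_distance /= offsetK // /offset i00 add0n gp3_dist_subn //.
exact: ltn_pmod.
Qed.

Definition nearer_u0 (t : nat * nat * nat) : nat := let: (b, a, c) := t in (b < a) + (a < c).
Definition nearer_vm (t : nat * nat * nat) : nat := let: (b, a, c) := t in (a < b) + (c < a).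
Definition favours_u0 (t : nat * nat * nat) : bool := let: (b, a, c) := t in (b <= a <= c) && (b < c).
Definition favours_vm (t : nat * nat * nat) : bool := let: (b, a, c) := t in (c <= a <= b) && (c < b).

Lemma nearer_u0_le t : ~~ favours_u0 t -> nearer_u0 t <= nearer_vm t.
Proof. by case: t => -[b a] c /=; lia. Qed.

Lemma nearer_u0_lt t : favours_vm t -> nearer_u0 t < nearer_vm t.
Proof. by case: t => -[b a] c /=; lia. Qed.

Lemma not_balanced_of_sum_neq n m : 16 <= n -> m < n ->
  \sum_(0 <= i < n) nearer_u0 (profile n m i) != \sum_(0 <= i < n) nearer_vm (profile n m i) ->
  ~ l_distance_balanced (GP n 3) (gp3_dist false true n m).
Proof.
move=> n16 m_lt + balanced; have n_gt0 : 0 < n by lia.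
have := balanced (false, Ordinal n_gt0) (true, Ordinal m_lt).
rewrite gdist_GP3 // /gp3_distance /= /offset subn0 modnDr modn_small // => /(_ erefl).
rewrite /Wset (card_profile _ ltn) // (card_profile _ (fun p q => q < p)) // => E.
by have -> : \sum_(0 <= i < n) nearer_u0 (profile n m i) = _ := E; rewrite eqxx.
Qed.

Lemma sum_ltn_witnesses n (f g : nat -> nat) (S : seq nat) : uniq S -> all (gtn n) S ->
  (forall i, i < n -> i \notin S -> f i <= g i) ->
  \sum_(i <- S) f i < \sum_(i <- S) g i ->
  \sum_(0 <= i < n) f i < \sum_(0 <= i < n) g i.
Proof.
move=> S_uniq S_lt le_fg lt_S.
have sum_S h : \sum_(0 <= i < n | i \in S) h i = \sum_(i <- S) h i.
  rewrite -big_filter; apply/perm_big/uniq_perm; rewrite ?filter_uniq ?iota_uniq // => i.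
  by rewrite mem_filter mem_iota add0n subn0; apply: andb_idr => /(allP S_lt).
rewrite (bigID (fun i => i \in S) _ f) (bigID (fun i => i \in S) _ g) /= !sum_S -addSn leq_add //.
by rewrite big_nat_cond [X in _ <= X]big_nat_cond; apply: leq_sum => i /andP[/andP[_ /le_fg]].
Qed.

Lemma not_balanced_witnesses n m (S : seq nat) : 16 <= n -> m < n -> uniq S -> all (gtn n) S ->
  (forall i, i < n -> i \notin S -> ~~ favours_u0 (profile n m i)) ->
  \sum_(i <- S) nearer_u0 (profile n m i) < \sum_(i <- S) nearer_vm (profile n m i) ->
  ~ l_distance_balanced (GP n 3) (gp3_dist false true n m).
Proof.
move=> n16 m_lt S_uniq S_lt not_favours lt_S; apply: not_balanced_of_sum_neq => //.
rewrite neq_ltn (sum_ltn_witnesses S_uniq S_lt) // => i i_lt i_S.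
exact/nearer_u0_le/not_favours.
Qed.

Lemma not_balanced_witness n m i0 : 16 <= n -> m < n -> i0 < n ->
  (forall i, i < n -> ~~ favours_u0 (profile n m i)) -> favours_vm (profile n m i0) ->
  ~ l_distance_balanced (GP n 3) (gp3_dist false true n m).
Proof.
move=> n16 m_lt i0_lt not_favours favours.
apply: (@not_balanced_witnesses n m [:: i0]); rewrite /= ?i0_lt // ?big_seq1.
  by move=> i i_lt _; apply: not_favours.
exact: (nearer_u0_lt favours).
Qed.

Lemma offset_if n i m : i < n -> m < n -> offset n i m = if i <= m then m - i else m + n - i.
Proof. by move=> ? ?; rewrite /offset modn_lt2; [case: ifP => ?; case: ifP; lia | lia]. Qed.

Lemma leq_of_lt_gp3_diam_bound n l : 16 <= n -> l < gp3_diam_bound n -> 6 * l <= n + 14.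
Proof. by rewrite /gp3_diam_bound; case: ifP => ? ?; lia. Qed.

Lemma not_favours_large_l n l i : 17 <= n -> 7 <= l -> l < gp3_diam_bound n -> i < n ->
  ~~ favours_u0 (profile n (3 * l - 7) i).
Proof.
move=> n17 ? l_lt ?; have := leq_of_lt_gp3_diam_bound (ltnW n17) l_lt => l_small.
rewrite /profile offset_if /=; try lia.
by move: l_lt; rewrite /gp3_diam_bound; case: ifP => ?; case: ifP => ? ?; gp3_lia.
Qed.

Lemma favours_vm_large_l n l : 17 <= n -> 7 <= l -> l < gp3_diam_bound n ->
  favours_vm (profile n (3 * l - 7) (3 * ((l - 1) %/ 2))).
Proof.
move=> n17 ? l_lt; have := leq_of_lt_gp3_diam_bound (ltnW n17) l_lt => l_small.
rewrite /profile offset_if /=; try lia.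
by move: l_lt; rewrite /gp3_diam_bound; case: ifP => ?; case: ifP => ? ?; gp3_lia.
Qed.

Lemma not_balanced_large_l n l : 17 <= n -> 7 <= l -> l < gp3_diam_bound n ->
  ~ l_distance_balanced (GP n 3) l.
Proof.
move=> n17 ? l_lt; have := leq_of_lt_gp3_diam_bound (ltnW n17) l_lt => l_small.
have -> : l = gp3_dist false true n (3 * l - 7).
  by move: l_lt; rewrite /gp3_diam_bound; case: ifP => ? ?; gp3_lia.
apply: (not_balanced_witness (i0 := 3 * ((l - 1) %/ 2))); try lia.
  by move=> i; apply: not_favours_large_l.
exact: favours_vm_large_l.
Qed.

Lemma not_favours_mid_l n l i : 26 <= n -> 5 <= l <= 6 -> i < n ->
  ~~ favours_u0 (profile n (3 * l - 5) i).
Proof.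
move=> ? /andP[l_ge l_le] ?; rewrite /profile offset_if /=; try lia.
by case: ifP => ?; gp3_lia.
Qed.

Lemma not_balanced_mid_l n l : 26 <= n -> 5 <= l <= 6 -> ~ l_distance_balanced (GP n 3) l.
Proof.
move=> ? l_range; have -> : l = gp3_dist false true n (3 * l - 5) by move: l_range; gp3_lia.
apply: (not_balanced_witness (i0 := 6)); try lia.
  by move=> i; apply: not_favours_mid_l.
by rewrite /profile offset_if /=; try lia; gp3_lia.
Qed.

Definition head_profile m t : nat * nat * nat :=
  (gp3_arc false false t, gp3_arc false true (if t <= m then m - t else t - m), gp3_arc true true t).

Definition tail_profile m k : nat * nat * nat :=
  (gp3_arc false false k, gp3_arc false true (m + k), gp3_arc true true k).

(* For t = 11 the distance d(v_0, v_11) already depends on n. *)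
Lemma profile_head n m t : 26 <= n -> m <= 9 -> t <= 12 -> t != 11 ->
  profile n m t = head_profile m t.
Proof. by move=> ? ? ? ?; rewrite /profile offset_if; try lia; congr (_, _, _); gp3_lia. Qed.

Lemma profile_tail n m k : 26 <= n -> m <= 9 -> 0 < k <= 3 ->
  profile n m (n - k) = tail_profile m k.
Proof.
move=> ? ? ?; rewrite /profile offset_if; try lia.
have -> : (n - k <= m) = false by lia.
by congr (_, _, _); gp3_lia.
Qed.

Definition head_witnesses : seq nat := [:: 1; 2; 3; 6; 9; 12].

(* Contains every index at which u_0 can gain on v_m, together with enough
   indices at which v_m gains to outweigh them. *)
Definition near_zero n : seq nat := head_witnesses ++ [seq n - k | k <- [:: 3; 2; 1]].

Lemma near_zero_excess n m : 26 <= n -> m \in [:: 0; 1; 4; 9] ->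
  \sum_(i <- near_zero n) nearer_u0 (profile n m i) <
  \sum_(i <- near_zero n) nearer_vm (profile n m i).
Proof.
move=> n26 m_in; have m_le : m <= 9 by move: m_in; rewrite !inE; lia.
have head_eq f : \sum_(t <- head_witnesses) f (profile n m t) =
                 \sum_(t <- head_witnesses) f (head_profile m t).
  by apply: eq_big_seq => t t_in; rewrite profile_head //; move: t_in; rewrite !inE; lia.
have tail_eq f : \sum_(k <- [:: 3; 2; 1]) f (profile n m (n - k)) =
                 \sum_(k <- [:: 3; 2; 1]) f (tail_profile m k).
  by apply: eq_big_seq => k k_in; rewrite profile_tail //; move: k_in; rewrite !inE; lia.
rewrite /near_zero !big_cat !big_map !head_eq !tail_eq.
by move: m_in; rewrite !inE => /or4P[] /eqP->; rewrite !big_cons !big_nil.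
Qed.

Lemma head_not_favours m t : m \in [:: 0; 1; 4; 9] -> t <= 10 -> t \notin head_witnesses ->
  ~~ favours_u0 (head_profile m t).
Proof.
have : all (fun m => all (fun t => (t \in head_witnesses) || ~~ favours_u0 (head_profile m t))
                         (iota 0 11)) [:: 0; 1; 4; 9] by [].
move=> /allP check /check /allP head_ok t_le t_out.
by have := head_ok t; rewrite mem_iota (negbTE t_out); apply; lia.
Qed.

Lemma not_favours_middle n m i : 26 <= n -> m <= 9 -> 10 < i -> i + 3 < n ->
  ~~ favours_u0 (profile n m i).
Proof. by move=> ? ? ? ?; rewrite /profile offset_if /=; try lia; gp3_lia. Qed.

Lemma not_favours_off_near_zero n m i : 26 <= n -> m \in [:: 0; 1; 4; 9] -> i < n ->
  i \notin near_zero n -> ~~ favours_u0 (profile n m i).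
Proof.
move=> n26 m_in i_lt; rewrite mem_cat negb_or => /andP[i_head i_tail].
have m_le : m <= 9 by move: m_in; rewrite !inE; lia.
case: (leqP i 10) => i_le; first by rewrite profile_head ?head_not_favours //; lia.
by apply: not_favours_middle => //; move: i_tail; rewrite /= !inE; lia.
Qed.

Lemma not_balanced_small_l n l : 26 <= n -> 1 <= l <= 4 -> ~ l_distance_balanced (GP n 3) l.
Proof.
move=> n26 l_range.
have [m m_in ->] : exists2 m, m \in [:: 0; 1; 4; 9] & l = gp3_dist false true n m.
  by case: l l_range => [|[|[|[|[|l]]]]] // _; [exists 0 | exists 1 | exists 4 | exists 9] => //; gp3_lia.
have m_le : m <= 9 by move: m_in; rewrite !inE; lia.
apply: (not_balanced_witnesses (S := near_zero n)); try lia.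
- by rewrite /= !inE; lia.
- by rewrite /=; lia.
- by move=> i; exact: not_favours_off_near_zero.
- exact: near_zero_excess.
Qed.

Definition W_count n (a : bool) (i : nat) (b : bool) (j : nat) : nat :=
  sumn [seq (gp3_dist false a n (offset n k i) < gp3_dist false b n (offset n k j)) +
            (gp3_dist true a n (offset n k i) < gp3_dist true b n (offset n k j)) | k <- iota 0 n].

Lemma card_Wset_GP3 n (x y : GPvert n) : 16 <= n -> #|Wset (GP n 3) x y| = W_count n x.1 x.2 y.1 y.2.
Proof.
move=> n16; rewrite /Wset card_set_bool_prod /W_count sumnE big_map.
have -> : iota 0 n = index_iota 0 n by rewrite /index_iota subn0.
rewrite big_mkord.
by apply: eq_bigr => i _; rewrite !gdist_GP3.
Qed.

Definition balanced_check n l : bool :=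
  all (fun a => all (fun i => all (fun b => all (fun j =>
    (gp3_dist a b n (offset n i j) == l) ==> (W_count n a i b j == W_count n b j a i))
    (iota 0 n)) [:: false; true]) (iota 0 n)) [:: false; true].

Lemma balanced_of_check n l : 16 <= n -> balanced_check n l -> l_distance_balanced (GP n 3) l.
Proof.
move=> n16 /allP check [a i] [b j]; rewrite gdist_GP3 // !card_Wset_GP3 //= => dist_l.
have mem_iota_ord (k : 'I_n) : val k \in iota 0 n by rewrite mem_iota ltn_ord.
have mem_bool (c : bool) : c \in [:: false; true] by case: c.
move: (check a (mem_bool a)) => /allP /(_ i (mem_iota_ord i)) /allP /(_ b (mem_bool b)).
by move=> /allP /(_ j (mem_iota_ord j)) /implyP /(_ (introT eqP dist_l)) /eqP.
Qed.

Definition unbalanced_check n l : bool :=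
  has (fun b => has (fun j => (gp3_dist false b n (offset n 0 j) == l) &&
                              (W_count n false 0 b j != W_count n b j false 0))
                    (iota 0 n)) [:: false; true].

Lemma not_balanced_of_check n l : 16 <= n -> unbalanced_check n l ->
  ~ l_distance_balanced (GP n 3) l.
Proof.
move=> n16 /hasP[b _ /hasP[j]]; rewrite mem_iota add0n => /andP[_ j_lt] /andP[/eqP dist_l].
apply: contraNnot => /(_ (false, Ordinal (leq_ltn_trans (leq0n j) j_lt)) (b, Ordinal j_lt)).
by rewrite gdist_GP3 // !card_Wset_GP3 //= => /(_ dist_l) ->.
Qed.

Lemma not_balanced_small_n n l : 17 <= n <= 25 -> 1 <= l < gp3_diam_bound n ->
  ~ l_distance_balanced (GP n 3) l.
Proof.
move=> n_range l_range; apply: not_balanced_of_check; first by lia.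
have : all (fun n => all (unbalanced_check n) (iota 1 (gp3_diam_bound n).-1)) (iota 17 9).
  by vm_compute.
have n_in : n \in iota 17 9 by rewrite mem_iota; lia.
have l_in : l \in iota 1 (gp3_diam_bound n).-1 by rewrite mem_iota; lia.
by move=> /allP /(_ n n_in) /allP /(_ l l_in).
Qed.

Lemma gdist_le_diam (T : finType) (e : rel T) (x y : T) : gdist e x y <= diam e.
Proof. exact: leq_trans (leq_bigmax y) (leq_bigmax (F := fun x => \max_y gdist e x y) x). Qed.

Lemma GP16_balanced : l_distance_balanced (GP 16 3) 5.
Proof. by apply: balanced_of_check; vm_compute. Qed.

Lemma diam_GP16_gt : 5 < diam (GP 16 3).
Proof.
apply: leq_trans (gdist_le_diam (GP 16 3) (false, Ordinal (isT : 0 < 16)) (false, Ordinal (isT : 8 < 16))).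
by rewrite gdist_GP3.
Qed.

Theorem theorem1p3 :
  (forall n : nat, 16 < n ->
     forall l : nat, 1 <= l < diam (GP n 3) ->
       ~ l_distance_balanced (GP n 3) l)
  /\
  (forall N : nat, N < 16 ->
     ~ (forall n : nat, N < n ->
          forall l : nat, 1 <= l < diam (GP n 3) ->
            ~ l_distance_balanced (GP n 3) l)).
Proof.
split.
  move=> n n17 l /andP[l_ge l_lt].
  have {}l_lt : l < gp3_diam_bound n by apply: leq_trans l_lt (diam_GP3_le _); lia.
  case: (leqP n 25) => [n_le | n26]; first by apply: not_balanced_small_n; lia.
  case: (leqP 7 l) => l7; first exact: not_balanced_large_l.
  case: (leqP 5 l) => l5; first by apply: not_balanced_mid_l; lia.
  by apply: not_balanced_small_l; lia.
move=> N N_lt all_unbalanced.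
by apply: (all_unbalanced 16 N_lt 5) GP16_balanced; rewrite diam_GP16_gt.
Qed.
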